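(* Let $\mathfrak{B}\in\mathfrak{L}_{m,p}$ and let $Q_\Phi$ be a QDF. If $\mathfrak{B}$ is dissipative with respect to $Q_\Phi$, then there exists a storage function for $(\mathfrak{B},Q_\Phi)$ of degree less than $\max\{\deg(Q_\Phi),\ell(\mathfrak{B})\}$.
   Context: Time axis $\mathbb{Z}_+$, $m,p\ge1$, $q=m+p$. $\mathfrak{L}_{m,p}$ is the set of behaviors $\mathfrak{B}=\{w=(u,y):\mathbb{Z}_+\to\mathbb{R}^{q}\mid \exists x:\mathbb{Z}_+\to\mathbb{R}^n,\ x(t+1)=Ax(t)+Bu(t),\ y(t)=Cx(t)+Du(t)\ \forall t\}$ for some real matrices $A,B,C,D$ of compatible sizes ($n\ge0$). The lag $\ell(\mathfrak{B})$ is the smallest $k\ge0$ with $\operatorname{rank}\mathcal{O}_k=\operatorname{rank}\mathcal{O}_{k+1}$, where $\mathcal{O}_k=\operatorname{col}(C,CA,\dots,CA^{k-1})$, for any such representation. A QDF with coefficient matrix $\Psi\in\mathbb{S}^{(M+1)q}$ ($M\ge-1$, $M=-1$ giving the zero QDF) is $Q_\Psi(w)(t)=w_{[t,t+M]}^\top\Psi w_{[t,t+M]}$, with $w_{[t,t+M]}=\operatorname{col}(w(t),\dots,w(t+M))$; its degree is the smallest $d\ge-1$ such that all $q\times q$ blocks $\Psi_{i,j}$ with $i>d$ vanish. $\nabla\Psi:=\begin{bmatrix}0_{q,q}&0\\0&\Psi\end{bmatrix}-\begin{bmatrix}\Psi&0\\0&0_{q,q}\end{bmatrix}$, so $Q_{\nabla\Psi}(w)(t)=Q_\Psi(w)(t+1)-Q_\Psi(w)(t)$.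 Inequalities ''on $\mathfrak{B}$'' hold for all $w\in\mathfrak{B}$ and all $t$. $\mathfrak{B}$ is dissipative with respect to $Q_\Phi$ if there is a QDF $Q_\Psi$ (a storage function for $(\mathfrak{B},Q_\Phi)$) with $Q_\Psi\ge0$ on $\mathfrak{B}$ and $Q_{\nabla\Psi}\le Q_\Phi$ on $\mathfrak{B}$. *)

From HB Require Import structures.
From mathcomp Require Import all_boot all_order all_algebra.
From mathcomp Require Import reals.
Set Implicit Arguments. Unset Strict Implicit. Unset Printing Implicit Defensive.
Import Order.TTheory GRing.Theory Num.Theory.
Local Open Scope ring_scope.

Section Defs.
Variable R : realType.

(** Trajectories w : Z_+ -> R^(m+p), w(t) = col(u(t), y(t)). *)
Definition traj (q : nat) := nat -> 'cV[R]_q.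

Definition behavior (m p n : nat) (A : 'M[R]_n) (B : 'M[R]_(n, m))
    (C : 'M[R]_(p, n)) (D : 'M[R]_(p, m)) : traj (m + p) -> Prop :=
  fun w => exists x : nat -> 'cV[R]_n, forall t : nat,
    x t.+1 = A *m x t + B *m usubmx (w t) /\
    dsubmx (w t) = C *m x t + D *m usubmx (w t).

Definition obsmx (p n : nat) (C : 'M[R]_(p, n)) (A : 'M[R]_n) (k : nat) :=
  \mxcol_(i < k) (C *m A ^+ i).

(** Lag: smallest k with rank O_k = rank O_(k+1) (such a k <= n always exists). *)
Definition lag (p n : nat) (C : 'M[R]_(p, n)) (A : 'M[R]_n) : nat :=
  find (fun k => \rank (obsmx C A k) == \rank (obsmx C A k.+1)) (iota 0 n.+1).

(** A QDF with N = M+1 blocks: coefficient matrix Psi in S^{N q}, block indexed. *)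
Definition qmx (q N : nat) := 'M[R]_(\sum_(i < N) q, \sum_(i < N) q).

Definition qsym (q N : nat) (Psi : qmx q N) : Prop := Psi^T = Psi.

Definition window (q N : nat) (w : traj q) (t : nat) : 'M[R]_(\sum_(i < N) q, 1) :=
  \mxcol_(i < N) w (t + i)%N.

Definition QDF (q N : nat) (Psi : qmx q N) (w : traj q) (t : nat) : R :=
  ((window N w t)^T *m Psi *m window N w t) 0 0.

(** Block (i,j) of Psi, with i,j given as naturals; zero if out of range. *)
Definition blk (q N : nat) (Psi : qmx q N) (i j : nat) : 'M[R]_(q, q) :=
  match (insub i : option 'I_N), (insub j : option 'I_N) with
  | Some i', Some j' => submxblock Psi i' j'
  | _, _ => 0
  end.

(** nabla Psi = diag(0_q, Psi) - diag(Psi, 0_q). *)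
Definition nabla (q N : nat) (Psi : qmx q N) : qmx q N.+1 :=
  \mxblock_(i < N.+1, j < N.+1)
    ((if (0 < i)%N && (0 < j)%N then blk Psi i.-1 j.-1 else 0) - blk Psi i j).

(** Degree: smallest d >= -1 such that all blocks Psi_{i,j} with i > d vanish. *)
Definition qdf_deg (q N : nat) (Psi : qmx q N) : int :=
  (find (fun d => [forall i : 'I_N, forall j : 'I_N,
            (d <= i)%N ==> (submxblock Psi i j == 0)]) (iota 0 N.+1))%:Z - 1.

Definition storage_function (q N K : nat) (Bh : traj q -> Prop)
    (Phi : qmx q N) (Psi : qmx q K) : Prop :=
  qsym Psi /\
  (forall w, Bh w -> forall t, 0 <= QDF Psi w t) /\
  (forall w, Bh w -> forall t, QDF (nabla Psi) w t <= QDF Phi w t).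

Definition dissipative (q N : nat) (Bh : traj q -> Prop) (Phi : qmx q N) : Prop :=
  exists (K : nat) (Psi : qmx q K), storage_function Bh Phi Psi.

End Defs.

From mathcomp Require Import all_boot all_order all_algebra.
From mathcomp Require Import reals ring zify.
Set Implicit Arguments. Unset Strict Implicit. Unset Printing Implicit Defensive.
Import Order.TTheory GRing.Theory Num.Theory.
Local Open Scope ring_scope.

(* Fix a storage function Psi and let L := max(deg Phi, lag). The value
   Q_Psi(w)(0) of the trajectory issued from state x under input U is a
   quadratic form in (x, U) that is nonnegative, so any (x, U) on which it
   vanishes can be added to an argument without changing the value. It
   vanishes on an input impulse at a time j >= L: the dissipation inequality at
   time 0, where Q_Phi does not yet see the impulse, shows that delaying the
   impulse never decreases the value, and once delayed beyond the window of Psi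
   the value is 0. It also vanishes on the free response of a state that is
   unobservable over L >= lag steps, since that response is identically zero.
   Hence Q_Psi(w)(t) depends only on w(t), ..., w(t+L-1); reconstructing a state
   and inputs linearly from these samples writes it as a QDF with L blocks,
   whose degree is at most L - 1 < max(deg Phi, lag). *)

Section QuadraticForm.
Variable R : numFieldType.

Definition quad_form k (Psi : 'M[R]_k) (v : 'cV[R]_k) : R := (v^T *m Psi *m v) 0 0.

Lemma quad_form_mulmx k k' (Psi : 'M[R]_k) (M : 'M[R]_(k, k')) (v : 'cV[R]_k') :
  quad_form (M^T *m Psi *m M) v = quad_form Psi (M *m v).
Proof. by rewrite /quad_form trmx_mul !mulmxA. Qed.

Lemma quad_formDZ k (Psi : 'M[R]_k) (a b : 'cV[R]_k) (s : R) : Psi^T = Psi ->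
  quad_form Psi (a + s *: b) =
  quad_form Psi a + 2 * s * (a^T *m Psi *m b) 0 0 + s ^+ 2 * quad_form Psi b.
Proof.
move=> Psi_sym.
have sym_ab : (b^T *m Psi *m a) 0 0 = (a^T *m Psi *m b) 0 0.
  by rewrite -[in LHS](trmxK (b^T *m Psi *m a)) mxE !trmx_mul trmxK Psi_sym mulmxA.
rewrite /quad_form [(a + _)^T]linearD /= [(s *: b)^T]linearZ /= !mulmxDr !mulmxDl.
by rewrite -!scalemxAr -!scalemxAl !mxE; rewrite !mxE in sym_ab; rewrite sym_ab; ring.
Qed.

(* As [quad_form Psi b = 0], the form is affine along the line a + s b, so
   nonnegativity forces its slope 2 a^T Psi b to vanish. *)
Lemma quad_formD_null k (Psi : 'M[R]_k) (a b : 'cV[R]_k) : Psi^T = Psi ->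
  (forall s, 0 <= quad_form Psi (a + s *: b)) -> quad_form Psi b = 0 ->
  quad_form Psi (a + b) = quad_form Psi a.
Proof.
move=> Psi_sym ge0 b0; set beta := (a^T *m Psi *m b) 0 0.
have beta0 : beta = 0.
  apply/eqP/negPn/negP => beta_neq0.
  have := ge0 (- (quad_form Psi a + 1) / (2 * beta)).
  rewrite quad_formDZ // -/beta b0 mulr0 addr0.
  have -> : 2 * (- (quad_form Psi a + 1) / (2 * beta)) * beta = - (quad_form Psi a + 1).
    by field; rewrite beta_neq0.
  by rewrite opprD addrA subrr sub0r oppr_ge0 ler10.
by rewrite -[b]scale1r quad_formDZ // -/beta beta0 b0 !mulr0 !addr0.
Qed.

End QuadraticForm.

Lemma linear_mx_repr (F : fieldType) (a b : nat) (h : 'cV[F]_a -> 'cV[F]_b) :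
  linear h -> exists M : 'M[F]_(b, a), forall v, h v = M *m v.
Proof.
move=> h_lin.
have hD : {morph h : x y / x + y} by move=> x y; rewrite -[x in LHS]scale1r h_lin scale1r.
have h0 : h 0 = 0 by apply: (addrI (h 0)); rewrite -hD !addr0.
have hZ c x : h (c *: x) = c *: h x by rewrite -[c *: x]addr0 h_lin h0 addr0.
exists (\matrix_(i, j) h (delta_mx j 0) i 0) => v.
rewrite {1}(matrix_sum_delta v) (big_morph h hD h0).
apply/matrixP => i k; rewrite (ord1 k) !mxE summxE.
apply: eq_bigr => j _; rewrite big_ord1 hZ !mxE mulrC.
by rewrite (ord1 (@ord0 0)).
Qed.

Lemma mxcolDZ (R : pzRingType) k (p_ : 'I_k -> nat) r (c : R)
    (X Y : forall i, 'M[R]_(p_ i, r)) :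
  \mxcol_i (c *: X i + Y i) = c *: \mxcol_i X i + \mxcol_i Y i.
Proof. by apply/matrixP => i j; rewrite !mxE. Qed.

Section QDF.
Variables (R : realType) (q : nat).
Implicit Types (w : traj R q) (N : nat).

Lemma QDFE N (Psi : qmx R q N) w t : QDF Psi w t = quad_form Psi (window N w t).
Proof. by []. Qed.

Lemma QDF_sum N (Psi : qmx R q N) w t :
  QDF Psi w t = \sum_(i < N) \sum_(j < N)
     ((w (t + i)%N)^T *m submxblock Psi i j *m w (t + j)%N) 0 0.
Proof.
rewrite /QDF /window tr_mxcol -[Psi in X in X 0 0]submxblockK.
rewrite mul_mxrow_mxblock mul_mxrow_mxcol summxE exchange_big /=.
by apply: eq_bigr => j _; rewrite mulmx_suml summxE.
Qed.

Lemma blkE N (Psi : qmx R q N) (i j : 'I_N) : blk Psi i j = submxblock Psi i j.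
Proof. by rewrite /blk !valK. Qed.

Lemma blk_lastl N (Psi : qmx R q N) j : blk Psi N j = 0.
Proof. by rewrite /blk insubF ?ltnn. Qed.

Lemma blk_lastr N (Psi : qmx R q N) i : blk Psi i N = 0.
Proof. by rewrite /blk; case: (insub i) => // ?; rewrite insubF ?ltnn. Qed.

Lemma QDF_nabla N (Psi : qmx R q N) w t :
  QDF (nabla Psi) w t = QDF Psi w t.+1 - QDF Psi w t.
Proof.
have termB (a b : 'cV[R]_q) (M1 M2 : 'M[R]_q) :
    (a^T *m (M1 - M2) *m b) 0 0 = (a^T *m M1 *m b) 0 0 - (a^T *m M2 *m b) 0 0.
  by rewrite mulmxBr mulmxBl !mxE.
have term0 (a b : 'cV[R]_q) : (a^T *m 0 *m b) 0 0 = 0 by rewrite mulmx0 mul0mx mxE.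
rewrite QDF_sum (eq_bigr (fun i : 'I_N.+1 => \sum_(j < N.+1) ((w (t + i)%N)^T *m
   (if (0 < i)%N && (0 < j)%N then blk Psi i.-1 j.-1 else 0) *m w (t + j)%N) 0 0 -
   \sum_(j < N.+1) ((w (t + i)%N)^T *m blk Psi i j *m w (t + j)%N) 0 0)); last first.
  by move=> i _; rewrite -sumrB; apply: eq_bigr => j _; rewrite /nabla mxblockK termB.
rewrite sumrB; congr (_ - _).
  rewrite big_ord_recl /= big1 ?add0r; last by move=> j _; rewrite term0.
  rewrite QDF_sum; apply: eq_bigr => i _.
  rewrite big_ord_recl /= term0 add0r; apply: eq_bigr => j _.
  by rewrite /= blkE !addSnnS.
rewrite big_ord_recr /= [X in _ + X]big1 ?addr0; last by move=> j _; rewrite blk_lastl term0.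
rewrite QDF_sum; apply: eq_bigr => i _.
by rewrite big_ord_recr /= blk_lastr term0 addr0; apply: eq_bigr => j _; rewrite blkE.
Qed.

Lemma eq_window N w w' t t' :
  (forall i, (i < N)%N -> w (t + i)%N = w' (t' + i)%N) -> window N w t = window N w' t'.
Proof. by move=> ww'; apply: eq_mxcol => i; apply: ww'. Qed.

Lemma windowDZ N (c : R) w1 w2 t :
  window N (fun k => c *: w1 k + w2 k) t = c *: window N w1 t + window N w2 t.
Proof. by apply/matrixP => i j; rewrite !mxE. Qed.

Lemma window_eq0 N w t : (forall i, (i < N)%N -> w (t + i)%N = 0) -> window N w t = 0.
Proof. by move=> w0; apply/matrixP => i j; rewrite !mxE w0 ?mxE. Qed.

Lemma qdf_degP N (Psi : qmx R q N) : exists d : nat,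
  [/\ (d <= N)%N, qdf_deg Psi = d%:Z - 1 &
      forall i j : 'I_N, (d <= i)%N -> submxblock Psi i j = 0].
Proof.
set P := fun d => [forall i : 'I_N, forall j : 'I_N,
                   (d <= i)%N ==> (submxblock Psi i j == 0)].
have PN : P N by apply/forallP => i; apply/forallP => j; rewrite leqNgt ltn_ord.
have P_has : has P (iota 0 N.+1) by apply/hasP; exists N; rewrite ?mem_iota ?add0n ?ltnSn.
have dN : (find P (iota 0 N.+1) < N.+1)%N by move: P_has; rewrite has_find size_iota.
exists (find P (iota 0 N.+1)); split => // i j di.
have := nth_find 0 P_has; rewrite nth_iota // add0n.
by move=> /forallP/(_ i)/forallP/(_ j)/implyP/(_ di)/eqP.
Qed.

Lemma qdf_deg_le N (Psi : qmx R q N) : qdf_deg Psi <= N%:Z - 1.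
Proof. by have [d [dN -> _]] := qdf_degP Psi; rewrite lerD2r lez_nat. Qed.

Lemma QDF_eq0_deg N (Phi : qmx R q N) (d : nat) w t : qdf_deg Phi <= d%:Z ->
  (forall i, (i <= d)%N -> w (t + i)%N = 0) -> QDF Phi w t = 0.
Proof.
have [d0 [_ -> Phi0]] := qdf_degP Phi => degd w0.
have d0d : (d0 <= d.+1)%N by lia.
rewrite QDF_sum big1 // => i _; rewrite big1 // => j _.
case: (leqP d0 i) => [d0i|id0]; first by rewrite Phi0 // mulmx0 mul0mx mxE.
by rewrite w0 ?trmx0 ?mul0mx ?mxE // -ltnS (leq_trans id0 d0d).
Qed.

End QDF.

Section StateSpace.
Variables (R : realType) (m p n : nat) (A : 'M[R]_n) (B : 'M[R]_(n, m))
  (C : 'M[R]_(p, n)) (D : 'M[R]_(p, m)).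
Implicit Types (x : 'cV[R]_n) (U : nat -> 'cV[R]_m).

Fixpoint state_traj x0 U t : 'cV[R]_n :=
  if t is t'.+1 then A *m state_traj x0 U t' + B *m U t' else x0.

Definition io_traj x0 U : traj R (m + p) :=
  fun t => col_mx (U t) (C *m state_traj x0 U t + D *m U t).

Lemma io_traj_behavior x0 U : behavior A B C D (io_traj x0 U).
Proof. by exists (state_traj x0 U) => t; rewrite /io_traj col_mxKu col_mxKd. Qed.

Lemma state_trajDZ c x1 x2 U1 U2 t :
  state_traj (c *: x1 + x2) (fun i => c *: U1 i + U2 i) t =
  c *: state_traj x1 U1 t + state_traj x2 U2 t.
Proof.
elim: t => [|t IH] //=; rewrite IH !mulmxDr -!scalemxAr scalerDr.
by rewrite -!addrA; congr (_ + _); rewrite addrCA !addrA.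
Qed.

Lemma io_trajDZ c x1 x2 U1 U2 t :
  io_traj (c *: x1 + x2) (fun i => c *: U1 i + U2 i) t =
  c *: io_traj x1 U1 t + io_traj x2 U2 t.
Proof.
rewrite /io_traj state_trajDZ scale_col_mx add_col_mx; congr col_mx.
rewrite !mulmxDr -!scalemxAr scalerDr -!addrA; congr (_ + _).
by rewrite addrCA !addrA.
Qed.

Lemma state_traj_shift x0 U t i :
  state_traj x0 U (t + i) = state_traj (state_traj x0 U t) (fun k => U (t + k)%N) i.
Proof. by elim: i => [|i IH]; rewrite ?addn0 // addnS /= IH. Qed.

Lemma io_traj_shift x0 U t i :
  io_traj x0 U (t + i) = io_traj (state_traj x0 U t) (fun k => U (t + k)%N) i.
Proof. by rewrite /io_traj state_traj_shift. Qed.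

Lemma eq_state_traj x0 U U' t : (forall i, (i < t)%N -> U i = U' i) ->
  state_traj x0 U t = state_traj x0 U' t.
Proof.
elim: t => [|t IH] UU' //=.
by rewrite IH ?UU' // => i it; apply: UU'; apply: ltnW.
Qed.

Lemma eq_io_traj x0 U U' t : (forall i, (i <= t)%N -> U i = U' i) ->
  io_traj x0 U t = io_traj x0 U' t.
Proof. by move=> UU'; rewrite /io_traj (@eq_state_traj x0 U U') ?UU' // => i /ltnW /UU'. Qed.

Lemma state_traj_free x0 U t : (forall i, (i < t)%N -> U i = 0) ->
  state_traj x0 U t = A ^+ t *m x0.
Proof.
elim: t => [|t IH] U0 /=; first by rewrite expr0 mul1mx.
by rewrite IH ?U0 ?mulmx0 ?addr0 ?exprS ?mulmxA // => i it; apply: U0; apply: ltnW.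
Qed.

Lemma state_traj_split x0 U t : state_traj x0 U t = A ^+ t *m x0 + state_traj 0 U t.
Proof.
elim: t => [|t IH] /=; first by rewrite expr0 mul1mx addr0.
by rewrite IH mulmxDr exprS mulmxA addrA.
Qed.

Lemma behavior_io_traj w : behavior A B C D w -> exists x : nat -> 'cV[R]_n,
  forall t i, w (t + i)%N = io_traj (x t) (fun k => usubmx (w (t + k)%N)) i.
Proof.
case=> x wx; exists x => t i.
have x_state : x (t + i)%N = state_traj (x t) (fun k => usubmx (w (t + k)%N)) i.
  by elim: i => [|i IH] /=; rewrite ?addn0 // addnS (proj1 (wx _)) IH.
by rewrite /io_traj -x_state -(proj2 (wx _)) vsubmxK.
Qed.

End StateSpace.

Section Lag.
Variables (R : realType) (p n : nat) (C : 'M[R]_(p, n)) (A : 'M[R]_n).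

Lemma obsmx_mul k (d : 'cV[R]_n) :
  obsmx C A k *m d = \mxcol_(i < k) (C *m A ^+ i *m d).
Proof. by rewrite /obsmx mxcol_mul. Qed.

Lemma obsmx_sub k : (obsmx C A k <= obsmx C A k.+1)%MS.
Proof.
rewrite !(eqmx_col (fun i => C *m A ^+ i)); apply/sumsmx_subP => i _.
by rewrite (sumsmx_sup (widen_ord (leqnSn k) i)).
Qed.

Lemma obsmx_last k : (C *m A ^+ k <= obsmx C A k.+1)%MS.
Proof. by rewrite (eqmx_col (fun i => C *m A ^+ i)) (sumsmx_sup ord_max) ?genmxE. Qed.

Lemma lag_rank_stable : \rank (obsmx C A (lag C A)) = \rank (obsmx C A (lag C A).+1).
Proof.
set P := fun k => \rank (obsmx C A k) == \rank (obsmx C A k.+1).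
suff P_has : has P (iota 0 n.+1).
  have := nth_find 0 P_has; move: P_has; rewrite has_find size_iota => lag_n.
  by rewrite nth_iota // add0n => /eqP.
apply/negPn/negP => /hasPn P_fails; have := rank_leq_col (obsmx C A n.+1).
suff rank_ge k : (k <= n.+1)%N -> (k <= \rank (obsmx C A k))%N.
  by rewrite leqNgt (rank_ge n.+1).
elim: k => [|k IH] // kn; apply: leq_ltn_trans (IH (ltnW kn)) _.
rewrite ltn_neqAle mxrankS ?obsmx_sub // andbT.
by apply: P_fails; rewrite mem_iota.
Qed.

Lemma obsmx_lag : (C *m A ^+ lag C A <= obsmx C A (lag C A))%MS.
Proof.
have := (mxrank_leqif_eq (obsmx_sub (lag C A))).2.
rewrite lag_rank_stable eqxx => /esym /andP [_ /(submx_trans (obsmx_last _))]; exact.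
Qed.

(* For j >= lag, C A^j = X *m obsmx C A lag *m A^(j - lag) only involves the
   exponents i + j - lag < j. *)
Lemma lag_obs_kernel L (d : 'cV[R]_n) : (lag C A <= L)%N ->
  (forall i, (i < L)%N -> C *m A ^+ i *m d = 0) -> forall j, C *m A ^+ j *m d = 0.
Proof.
move=> lagL d0; have /submxP [X CAlag] := obsmx_lag.
elim/ltn_ind => j IH; case: (ltnP j L) => [jL | Lj]; first exact: d0.
rewrite -(subnKC (leq_trans lagL Lj)) exprD mulmxA CAlag -!mulmxA obsmx_mul.
suff -> : \mxcol_(i < lag C A) (C *m A ^+ i *m (A ^+ (j - lag C A) *m d)) = 0.
  by rewrite mulmx0.
rewrite -(mxcol0 (p_ := fun=> p)); apply: eq_mxcol => i.
rewrite mulmxA -(mulmxA C) mulmxE -exprD IH //.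
by have := ltn_ord i; lia.
Qed.

End Lag.

Section ShortStorage.
Variables (R : realType) (m p n : nat) (A : 'M[R]_n) (B : 'M[R]_(n, m))
  (C : 'M[R]_(p, n)) (D : 'M[R]_(p, m)).
Variables (N : nat) (Phi : qmx R (m + p) N) (K : nat) (Psi : qmx R (m + p) K).
Hypothesis Psi_sym : qsym Psi.
Hypothesis Psi_ge0 : forall w, behavior A B C D w -> forall t, 0 <= QDF Psi w t.
Hypothesis Psi_diss : forall w, behavior A B C D w -> forall t,
  QDF (nabla Psi) w t <= QDF Phi w t.
Variable L : nat.
Hypothesis Phi_deg : qdf_deg Phi <= L%:Z.
Hypothesis lag_L : (lag C A <= L)%N.

Local Notation state_traj := (state_traj A B).
Local Notation io_traj := (io_traj A B C D).
Implicit Types (x : 'cV[R]_n) (U : nat -> 'cV[R]_m).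

Definition stored x U := QDF Psi (io_traj x U) 0.

Lemma stored_ge0 x U : 0 <= stored x U.
Proof. exact: Psi_ge0 (io_traj_behavior _ _ _ _ _ _) 0. Qed.

Lemma eq_stored x U U' : (forall i, (i < K)%N -> U i = U' i) -> stored x U = stored x U'.
Proof.
move=> UU'; rewrite /stored !QDFE (@eq_window _ _ K (io_traj x U) (io_traj x U') 0 0) //.
by move=> i iK; apply: eq_io_traj => k ki; apply: UU'; apply: leq_ltn_trans ki iK.
Qed.

Lemma storedD_null x U dx dU : stored dx dU = 0 ->
  stored (dx + x) (fun i => dU i + U i) = stored x U.
Proof.
move=> null.
have win s : window K (io_traj (s *: dx + x) (fun i => s *: dU i + U i)) 0 =
    window K (io_traj x U) 0 + s *: window K (io_traj dx dU) 0.
  by rewrite [RHS]addrC -windowDZ; apply: eq_window => i _; rewrite io_trajDZ.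
have win1 : window K (io_traj (dx + x) (fun i => dU i + U i)) 0 =
    window K (io_traj x U) 0 + window K (io_traj dx dU) 0.
  rewrite -[in RHS](scale1r (window K (io_traj dx dU) 0)) -win; apply: eq_window => i _.
  by rewrite scale1r; apply: eq_io_traj => k _; rewrite scale1r.
rewrite /stored !QDFE win1 quad_formD_null // => s.
by rewrite -win -QDFE; apply: stored_ge0.
Qed.

Definition impulse (j : nat) (a : 'cV[R]_m) : nat -> 'cV[R]_m :=
  fun i => if i == j then a else 0.

Lemma io_traj_impulse_before j a i : (i < j)%N -> io_traj 0 (impulse j a) i = 0.
Proof.
move=> ij; rewrite /io_traj state_traj_free ?mulmx0 /impulse.
  by rewrite (ltn_eqF ij) mulmx0 addr0 col_mx0.
by move=> k ki; rewrite (ltn_eqF (ltn_trans ki ij)).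
Qed.

Lemma stored_impulseS j a :
  stored 0 (impulse j a) = QDF Psi (io_traj 0 (impulse j.+1 a)) 1.
Proof.
rewrite /stored !QDFE; congr quad_form; apply: eq_window => i _.
rewrite (io_traj_shift _ _ _ _ _ _ 1) add0n /= /impulse mulmx0 add0r mulmx0.
by apply: eq_io_traj => k _; rewrite add1n eqSS.
Qed.

Lemma stored_impulse_le j a : (L <= j)%N ->
  stored 0 (impulse j a) <= stored 0 (impulse j.+1 a).
Proof.
move=> Lj; have := Psi_diss (io_traj_behavior A B C D 0 (impulse j.+1 a)) 0.
rewrite QDF_nabla (@QDF_eq0_deg _ _ _ Phi L) // => [|i iL].
  by rewrite subr_le0 -stored_impulseS.
by rewrite add0n io_traj_impulse_before // ltnS (leq_trans iL Lj).
Qed.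

Lemma stored_impulse_late j a : (L <= j)%N -> stored 0 (impulse j a) = 0.
Proof.
move=> Lj; apply/eqP; rewrite eq_le stored_ge0 andbT.
have mono k : stored 0 (impulse j a) <= stored 0 (impulse (j + k) a).
  elim: k => [|k IH]; first by rewrite addn0.
  by apply: le_trans IH _; rewrite addnS stored_impulse_le // (leq_trans Lj (leq_addr _ _)).
apply: le_trans (mono K) _; rewrite /stored QDFE window_eq0; last first.
  by move=> i iK; rewrite add0n io_traj_impulse_before // (leq_trans iK (leq_addl _ _)).
by rewrite /quad_form trmx0 !mul0mx mxE.
Qed.

(* [Uk k] follows U before time L + k and U' afterwards; passing from [Uk k]
   to [Uk k.+1] adds an impulse at time L + k. *)
Lemma stored_input_late x U U' : (forall i, (i < L)%N -> U i = U' i) ->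
  stored x U = stored x U'.
Proof.
move=> UU'; pose Uk k i := if (i < L + k)%N then U i else U' i.
suff Uk_stored k : stored x (Uk k) = stored x U'.
  rewrite -(Uk_stored K); apply: eq_stored => i iK.
  by rewrite /Uk (leq_trans iK (leq_addl _ _)).
elim: k => [|k IH].
  by apply: eq_stored => i _; rewrite /Uk addn0; case: ifP => // /UU'.
rewrite -IH -(storedD_null x (Uk k) (stored_impulse_late (U (L + k)%N - U' (L + k)%N)
  (leq_addr k L))) add0r.
apply: eq_stored => i _; rewrite /Uk /impulse addnS ltnS leq_eqVlt.
by case: eqVneq => [->|_] /=; rewrite ?ltnn ?subrK ?add0r.
Qed.

Lemma stored_state_unobs x x' U :
  (forall i, (i < L)%N -> C *m A ^+ i *m (x - x') = 0) -> stored x U = stored x' U.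
Proof.
move=> unobs; have null : stored (x - x') (fun=> 0) = 0.
  rewrite /stored QDFE window_eq0 ?/quad_form ?trmx0 ?mul0mx ?mxE // => i _.
  rewrite /io_traj state_traj_free // mulmx0 addr0 mulmxA.
  by rewrite (lag_obs_kernel lag_L unobs) col_mx0.
by rewrite -(storedD_null x' U null) subrK; apply: eq_stored => i _; rewrite add0r.
Qed.

Lemma stored_window x U x' U' :
  (forall i, (i < L)%N -> io_traj x U i = io_traj x' U' i) -> stored x U = stored x' U'.
Proof.
move=> xx'; have UU' i : (i < L)%N -> U i = U' i.
  by move=> iL; have := congr1 usubmx (xx' i iL); rewrite !col_mxKu.
rewrite (stored_input_late x UU') (@stored_state_unobs x x') // => i iL.
have := congr1 dsubmx (xx' i iL); rewrite !col_mxKd -(UU' i iL) => /addIr.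
rewrite (state_traj_split A B x) (state_traj_split A B x').
rewrite (@eq_state_traj _ _ _ A B 0 U U' i) => [|k ki]; last exact/UU'/(ltn_trans ki).
by rewrite mulmxBr !mulmxDr !mulmxA => /addIr ->; rewrite subrr.
Qed.

Implicit Types (v : 'cV[R]_(\sum_(i < L) (m + p))).

Definition sample v (j : nat) : 'cV[R]_(m + p) :=
  if insub j is Some i then submxcol (p_ := fun=> (m + p)%N) v i else 0.

Definition sample_input v (j : nat) : 'cV[R]_m := usubmx (sample v j).

Definition free_output v : 'cV[R]_(\sum_(i < L) p) :=
  \mxcol_(i < L) (dsubmx (sample v i) -
                  (C *m state_traj 0 (sample_input v) i + D *m sample_input v i)).

(* A solution of [obsmx C A L *m x = free_output v] whenever one exists;
   pinvmx inverts on row spaces, hence the transpositions. *)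
Definition state_estimate v : 'cV[R]_n :=
  ((free_output v)^T *m pinvmx (obsmx C A L)^T)^T.

Definition reconstruct v : 'cV[R]_(\sum_(i < K) (m + p)) :=
  window K (io_traj (state_estimate v) (sample_input v)) 0.

Lemma sampleDZ c v1 v2 j : sample (c *: v1 + v2) j = c *: sample v1 j + sample v2 j.
Proof.
rewrite /sample; case: (insub j) => [i|]; last by rewrite scaler0 addr0.
by apply/matrixP => x y; rewrite !mxE.
Qed.

Lemma sample_inputDZ c v1 v2 j :
  sample_input (c *: v1 + v2) j = c *: sample_input v1 j + sample_input v2 j.
Proof. by rewrite /sample_input sampleDZ linearD /= linearZ. Qed.

Lemma free_outputDZ c v1 v2 :
  free_output (c *: v1 + v2) = c *: free_output v1 + free_output v2.
Proof.
rewrite /free_output -mxcolDZ; apply: eq_mxcol => i.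
have -> : state_traj 0 (sample_input (c *: v1 + v2)) i =
    c *: state_traj 0 (sample_input v1) i + state_traj 0 (sample_input v2) i.
  rewrite -state_trajDZ scaler0 addr0.
  by apply: eq_state_traj => k _; apply: sample_inputDZ.
rewrite sampleDZ sample_inputDZ linearD /= linearZ /= !mulmxDr -!scalemxAr.
by apply/matrixP => x y; rewrite !mxE; ring.
Qed.

Lemma state_estimateDZ c v1 v2 :
  state_estimate (c *: v1 + v2) = c *: state_estimate v1 + state_estimate v2.
Proof.
rewrite /state_estimate free_outputDZ [(c *: _ + _)^T]linearD /= [(c *: _)^T]linearZ /=.
by rewrite mulmxDl -scalemxAl linearD /= linearZ.
Qed.

Lemma reconstruct_linear : linear reconstruct.
Proof.
move=> c v1 v2; rewrite /reconstruct -windowDZ; apply: eq_window => i _.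
rewrite -io_trajDZ state_estimateDZ; apply: eq_io_traj => k _; exact: sample_inputDZ.
Qed.

Lemma sample_window w t i : (i < L)%N -> sample (window L w t) i = w (t + i)%N.
Proof. by move=> iL; rewrite /sample (insubT (fun k => k < L)%N iL) mxcolK. Qed.

Lemma sample_input_window x U k : (k < L)%N ->
  sample_input (window L (io_traj x U) 0) k = U k.
Proof. by move=> kL; rewrite /sample_input sample_window // col_mxKu. Qed.

Lemma free_output_window x U :
  free_output (window L (io_traj x U) 0) = obsmx C A L *m x.
Proof.
rewrite obsmx_mul; apply: eq_mxcol => i.
rewrite sample_window // add0n col_mxKd sample_input_window //.
rewrite (@eq_state_traj _ _ _ A B 0 _ U) => [|k ki]; last first.
  exact/sample_input_window/(ltn_trans ki).
by rewrite (state_traj_split A B x) mulmxDr mulmxA -(addrA (C *m A ^+ i *m x)) addrK.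
Qed.

Lemma obsmx_state_estimate x U :
  obsmx C A L *m state_estimate (window L (io_traj x U) 0) = obsmx C A L *m x.
Proof.
set O := obsmx C A L.
have sub : ((free_output (window L (io_traj x U) 0))^T <= O^T)%MS.
  by rewrite free_output_window trmx_mul submxMl.
rewrite /state_estimate -[O in LHS]trmxK -trmx_mul (mulmxKpV sub) trmxK.
exact: free_output_window.
Qed.

Lemma stored_reconstruct x U (W := window L (io_traj x U) 0) :
  stored (state_estimate W) (sample_input W) = stored x U.
Proof.
apply: stored_window => i iL; rewrite /io_traj sample_input_window //; congr col_mx.
have := obsmx_state_estimate x U.
rewrite !obsmx_mul => /eq_mxcolP /(_ (Ordinal iL)) /= CAi.
rewrite (state_traj_split A B x) (state_traj_split A B (state_estimate W)).
rewrite !mulmxDr !mulmxA CAi (@eq_state_traj _ _ _ A B 0 _ U) // => k ki.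
exact/sample_input_window/(ltn_trans ki).
Qed.

Lemma storage_shorten :
  exists Psi' : qmx R (m + p) L, storage_function (behavior A B C D) Phi Psi'.
Proof.
have [M reconstructE] := linear_mx_repr reconstruct_linear.
have Psi'E w t : behavior A B C D w -> QDF (M^T *m Psi *m M) w t = QDF Psi w t.
  case/behavior_io_traj => x wx; set U := fun k => usubmx (w (t + k)%N).
  have win N' : window N' w t = window N' (io_traj (x t) U) 0.
    by apply: eq_window => i _; rewrite add0n wx.
  by rewrite !QDFE quad_form_mulmx -reconstructE !win; apply: stored_reconstruct.
exists (M^T *m Psi *m M); split; [|split].
- by rewrite /qsym !trmx_mul trmxK Psi_sym mulmxA.
- by move=> w w_B t; rewrite Psi'E //; apply: Psi_ge0.
- by move=> w w_B t; rewrite QDF_nabla !Psi'E // -QDF_nabla; apply: Psi_diss.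
Qed.

End ShortStorage.

Theorem theorem1 (R : realType) (m p n : nat) (hm : (1 <= m)%N) (hp : (1 <= p)%N)
    (A : 'M[R]_n) (B : 'M[R]_(n, m)) (C : 'M[R]_(p, n)) (D : 'M[R]_(p, m))
    (N : nat) (Phi : qmx R (m + p) N) (hPhi : qsym Phi) :
  dissipative (behavior A B C D) Phi ->
  exists (K : nat) (Psi : qmx R (m + p) K),
    storage_function (behavior A B C D) Phi Psi /\
    qdf_deg Psi < Num.max (qdf_deg Phi) (lag C A)%:Z.
Proof.
move=> [K [Psi [Psi_sym [Psi_ge0 Psi_diss]]]].
set L := `|Num.max (qdf_deg Phi) (lag C A)%:Z|%N.
have Phi_deg : qdf_deg Phi <= L%:Z by lia.
have lag_L : (lag C A <= L)%N by lia.
have [Psi' Psi'_storage] := storage_shorten Psi_sym Psi_ge0 Psi_diss Phi_deg lag_L.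
exists L, Psi'; split => //; have := qdf_deg_le Psi'; lia.
Qed.
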